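(* Let $a_0=0$ and let $a_1<a_2<\cdots$ be the increasing enumeration of $\{m\ge1:\ c_m=1\}$. Then $$\liminf_{n\to\infty}\frac{a_n}{n^2}=\frac16,\qquad \limsup_{n\to\infty}\frac{a_n}{n^2}=\frac12,$$ and the set $\left\{\frac{a_n}{n^2}:\ n\ge1\right\}$ is dense (in the Euclidean topology) in the interval $\left[\frac16,\frac12\right]$.
   Context: For $n\in\mathbb{N}$ let $s_2(n)$ be the sum of the binary digits of $n$ and $t_n=s_2(n)\bmod 2$ (the Prouhet–Thue–Morse sequence). Let $F(X)=\sum_{n\ge1}t_nX^n\in\mathbb{F}_2[[X]]$ and let $G(X)=\sum_{n\ge1}c_nX^n\in\mathbb{F}_2[[X]]$ be its compositional inverse, i.e. $F(G(X))=G(F(X))=X$. The $c_n$ are identified with integers in $\{0,1\}$. *)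

From HB Require Import structures.
From mathcomp Require Import all_boot all_order all_algebra.
From mathcomp Require Import all_classical all_reals all_analysis.
Set Implicit Arguments. Unset Strict Implicit. Unset Printing Implicit Defensive.
Import Order.TTheory GRing.Theory Num.Theory.
Local Open Scope ring_scope.

(* s_2(n): sum of binary digits of n (bits beyond position n are zero). *)
Definition s2 (n : nat) : nat := (\sum_(i < n.+1) ((n %/ 2 ^ i) %% 2))%N.

Definition tm (n : nat) : 'F_2 := ((s2 n) %% 2)%:R.

(* Truncation of F(X) = sum_{n>=1} t_n X^n to degree N (t_0 = 0 anyway). *)
Definition Ftrunc (N : nat) : {poly 'F_2} := \poly_(i < N.+1) (if i == 0%N then 0 else tm i).

Definition Gtrunc (c : nat -> 'F_2) (N : nat) : {poly 'F_2} := \poly_(i < N.+1) c i.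

(* G = sum_{n>=1} c_n X^n is the compositional inverse of F in F_2[[X]]:
   G has no constant term and F(G(X)) = G(F(X)) = X.  Since F and G have zero
   constant term, the coefficient of X^i (i <= N) of the formal composition
   only depends on the coefficients of degree <= N, so it can be computed
   on the degree-N truncations. *)
Definition is_comp_inverse (c : nat -> 'F_2) : Prop :=
  c 0%N = 0 /\
  forall N i : nat, (i <= N)%N ->
    ((Ftrunc N) \Po (Gtrunc c N))`_i = (i == 1%N)%:R /\
    ((Gtrunc c N) \Po (Ftrunc N))`_i = (i == 1%N)%:R.

Definition is_enum (c : nat -> 'F_2) (a : nat -> nat) : Prop :=
  a 0%N = 0%N /\
  (forall n, (a n < a n.+1)%N) /\
  (forall m, (0 < m)%N -> (c m = 1 <-> exists n, (0 < n)%N /\ a n = m)).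

Definition a_ratio (R : realType) (a : nat -> nat) (n : nat) : R :=
  (a n)%:R / (n ^ 2)%:R.

(* Since t_{2n} = t_n and t_{2n+1} = 1 + t_n, the series F satisfies
   (1 + X)^2 F + (1 + X)^3 F^2 = X over F_2.  Substituting G, the inverse is the
   unique G with (1 + G)^2 X + (1 + G)^3 X^2 = G, i.e. (1 + X + X G)^3 = 1 + X.
   Let Q be the series of the spread numbers (binary expansions read in base 4).
   Then Q = (1 + X) Q^4, so P = Q(X^8) satisfies (1 + X)^8 P^3 = 1, and
   1 + X + X G = (1 + X)^3 P.  Hence c_m = 1 iff m > 0, (m + 1) mod 8 < 4 and
   (m + 1) div 8 is a spread number, i.e. a_n = 8 s(q) + r - 1 where n + 1 = 4 q + r
   with r < 4 and s(q) the spread of q.  Since (q^2 + 2 q)/3 <= s(q) <= q^2, with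
   equality at q = 2^k - 1 and at q = 2^k respectively, a_n/n^2 has liminf 1/6 and
   limsup 1/2; as a_n increases, a_n/n^2 drops by O(1/n) at most in one step, so
   it passes close to every point of [1/6, 1/2]. *)

From HB Require Import structures.
From mathcomp Require Import all_boot all_order all_algebra.
From mathcomp Require Import all_classical all_reals all_analysis.
From mathcomp Require Import zify ring lra.
Import Order.TTheory GRing.Theory Num.Theory numFieldNormedType.Exports.
Local Open Scope classical_set_scope.
Local Open Scope ring_scope.
Set Implicit Arguments.
Unset Strict Implicit.
Unset Printing Implicit Defensive.

Reserved Notation "p = q %[modX n ]"
  (at level 70, q at next level, format "p  =  q  %[modX  n ]").

Definition eqX {F : fieldType} (n : nat) (p q : {poly F}) := 'X^n %| p - q.
Notation "p = q %[modX n ]" := (eqX n p q) : ring_scope.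

Section CongruenceModXn.
Variable F : fieldType.
Implicit Types p q r g : {poly F}.

Lemma eqX_coef n p q : p = q %[modX n] <-> forall i, (i < n)%N -> p`_i = q`_i.
Proof.
split=> [/dvdpP [r pqE] i lt_in | Epq].
  by apply/eqP; rewrite -subr_eq0 -coefB pqE coefMXn lt_in.
apply/dvdpP; exists (drop_poly n (p - q)).
rewrite -[LHS](poly_take_drop n) [take_poly _ _](_ : _ = 0) ?add0r //.
apply/polyP => i; rewrite coef_take_poly coef0 coefB.
by case: ifP => // /Epq ->; rewrite subrr.
Qed.

Lemma eqX_refl n p : p = p %[modX n].
Proof. by rewrite /eqX subrr dvdp0. Qed.

Lemma eqX_sym n p q : p = q %[modX n] -> q = p %[modX n].
Proof. by rewrite /eqX -opprB dvdpNr. Qed.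

Lemma eqX_trans n p q r : p = q %[modX n] -> q = r %[modX n] -> p = r %[modX n].
Proof. by move=> Hpq Hqr; rewrite /eqX -(subrK q p) -addrA; apply: dvdp_add. Qed.

Lemma eqX_sub0 n p q : p = q %[modX n] <-> p - q = 0 %[modX n].
Proof. by rewrite /eqX subr0. Qed.

Lemma eqX_add n p q p' q' :
  p = q %[modX n] -> p' = q' %[modX n] -> p + p' = q + q' %[modX n].
Proof. by move=> Epq Epq'; rewrite /eqX opprD addrACA; apply: dvdp_add. Qed.

Lemma eqX_opp n p q : p = q %[modX n] -> - p = - q %[modX n].
Proof. by rewrite /eqX -opprD dvdpNr. Qed.

Lemma eqX_mul n p q p' q' :
  p = q %[modX n] -> p' = q' %[modX n] -> p * p' = q * q' %[modX n].
Proof.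
move=> Epq Epq'; rewrite /eqX.
have -> : p * p' - q * q' = (p - q) * p' + q * (p' - q') by ring.
by apply: dvdp_add; [apply: dvdp_mulr | apply: dvdp_mull].
Qed.

Lemma eqX_exp n p q k : p = q %[modX n] -> p ^+ k = q ^+ k %[modX n].
Proof.
by move=> Epq; elim: k => [|k IH]; rewrite ?eqX_refl // !exprS eqX_mul.
Qed.

Lemma eqX_leq m n p q : (m <= n)%N -> p = q %[modX n] -> p = q %[modX m].
Proof. by move=> le_mn; apply: dvdp_trans; rewrite dvdp_exp2l. Qed.

Lemma dvdXp p : ('X %| p) = (p.[0] == 0).
Proof. by rewrite -(subr0 'X) -polyC0 dvdp_XsubCl rootE. Qed.

Lemma eqX_comp n p q g : 'X %| g -> p = q %[modX n] -> p \Po g = q \Po g %[modX n].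
Proof.
move=> /dvdpP [g' ->] /dvdpP [r pqE]; rewrite /eqX -comp_polyB pqE comp_polyM.
by rewrite comp_Xn_poly exprMn dvdp_mull // dvdp_mulIr.
Qed.

Lemma eqX_compXn m d p q :
  p = q %[modX m] -> p \Po 'X^d = q \Po 'X^d %[modX m * d].
Proof.
move=> /dvdpP [r pqE]; rewrite /eqX -comp_polyB pqE comp_polyM comp_Xn_poly.
by rewrite -exprM mulnC dvdp_mulIr.
Qed.

Lemma eqX_cancel n p q : q`_0 != 0 -> p * q = 0 %[modX n] -> p = 0 %[modX n].
Proof.
move=> q0; rewrite /eqX !subr0 Gauss_dvdpl // coprimep_expl //.
by rewrite coprimep_sym coprimepX rootE horner_coef0.
Qed.

Lemma eqX_cancelX n p q : 'X * p = 'X * q %[modX n.+1] -> p = q %[modX n].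
Proof. by rewrite /eqX -mulrBr exprS dvdp_mul2l ?polyX_eq0. Qed.

End CongruenceModXn.

Section PolyF2.
Implicit Types p q : {poly 'F_2}.

Lemma pchar2_poly_F2 : (2 \in [pchar {poly 'F_2}])%N.
Proof. by rewrite pchar_poly pchar_Fp. Qed.

Lemma addrr_F2 (x : 'F_2) : x + x = 0.
Proof. exact: (addrr_pchar2 (pchar_Fp _)). Qed.

Lemma addrr_F2poly p : p + p = 0.
Proof. exact: (addrr_pchar2 pchar2_poly_F2). Qed.

Lemma oppr_F2 p : - p = p.
Proof. exact: (oppr_pchar2 pchar2_poly_F2). Qed.

Lemma sqrrD_F2 p q : (p + q) ^+ 2 = p ^+ 2 + q ^+ 2.
Proof. by rewrite sqrrD mulr2n addrr_F2poly addr0. Qed.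

Lemma natr_F2_eq1 (b : bool) : (b%:R : 'F_2) = 1 <-> b.
Proof. by case: b. Qed.

Lemma sqr_F2 (x : 'F_2) : x ^+ 2 = x.
Proof. by case: x => [[|[|//]]] ?; apply: val_inj. Qed.

Lemma sqr_poly_F2 p : p ^+ 2 = p \Po 'X^2.
Proof.
elim/poly_ind: p => [|p c IH]; first by rewrite expr0n comp_poly0.
by rewrite comp_poly_MXaddC -IH sqrrD_F2 exprMn -polyC_exp sqr_F2.
Qed.

Lemma exp2n_poly_F2 p k : p ^+ (2 ^ k) = p \Po 'X^(2 ^ k).
Proof.
elim: k => [|k IH]; first by rewrite expn0 comp_polyXr.
by rewrite expnSr exprM IH sqr_poly_F2 -comp_polyA comp_Xn_poly -exprM mulnC.
Qed.

Lemma X1_exp8_F2 : (1 + 'X : {poly 'F_2}) ^+ 8 = 1 + 'X^8.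
Proof. by rewrite (exp2n_poly_F2 _ 3) comp_polyD comp_polyX -polyC1 comp_polyC. Qed.

End PolyF2.

Definition weighted_bits (w : nat -> nat) (n : nat) : nat :=
  (\sum_(i < n.+1) (n %/ 2 ^ i %% 2) * w i)%N.

Lemma weighted_bits_wide w n M : (n < M)%N ->
  weighted_bits w n = (\sum_(i < M) (n %/ 2 ^ i %% 2) * w i)%N.
Proof.
elim: M => // M IH; rewrite ltnS leq_eqVlt => /orP [/eqP <- // | lt_nM].
rewrite big_ord_recr /= -(IH lt_nM) divn_small ?mod0n ?addn0 //.
exact: ltn_trans lt_nM (ltn_expl _ _).
Qed.

Lemma weighted_bits_rec w n :
  weighted_bits w n = (n %% 2 * w 0%N + weighted_bits (fun i => w i.+1) (n %/ 2))%N.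
Proof.
rewrite (@weighted_bits_wide w n n.+2) // big_ord_recl /= expn0 divn1.
rewrite (@weighted_bits_wide _ (n %/ 2) n.+1) ?ltnS ?leq_div //.
by congr addn; apply: eq_bigr => i _; rewrite /bump /= add1n expnS divnMA.
Qed.

Lemma s2_rec n : s2 n = (n %% 2 + s2 (n %/ 2))%N.
Proof.
have s2E m : s2 m = weighted_bits (fun=> 1%N) m.
  by apply: eq_bigr => i _; rewrite muln1.
by rewrite !s2E weighted_bits_rec muln1.
Qed.

Lemma tmE n : tm n = (s2 n)%:R.
Proof. by rewrite /tm Fp_nat_mod. Qed.

Lemma tm_rec n : tm n = (n %% 2)%:R + tm (n %/ 2).
Proof. by rewrite !tmE s2_rec natrD. Qed.

Lemma tm0 : tm 0 = 0.
Proof. by rewrite /tm /s2 big_ord1. Qed.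

Lemma coef_Ftrunc N k : (Ftrunc N)`_k = if (k < N.+1)%N then tm k else 0.
Proof. by rewrite coef_poly; case: ifP => //; case: eqP => // ->; rewrite tm0. Qed.

Lemma coef_Ftrunc_sqr N k : (k < N.+1)%N ->
  (Ftrunc N ^+ 2)`_k = if odd k then 0 else tm k./2.
Proof.
move=> lt_kN; rewrite sqr_poly_F2 coef_comp_poly_Xn // dvdn2 divn2 coef_Ftrunc.
by case: (odd k) => //=; rewrite (leq_ltn_trans _ lt_kN) // -divn2 leq_div.
Qed.

Definition even_series (M : nat) : {poly 'F_2} := \poly_(i < M) (~~ odd i)%:R.

Lemma X1sqr_even_series M : (1 + 'X) ^+ 2 * even_series M = 1 %[modX M].
Proof.
apply/eqX_coef => k lt_kM; rewrite sqrrD_F2 expr1n mulrDl mul1r coefD coefXnM coef1.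
rewrite !coef_poly lt_kM.
case: k lt_kM => [|[|k]] lt_kM //=; rewrite ?addr0 //.
by rewrite subn2 /= (ltn_trans _ lt_kM) // negbK addrr_F2.
Qed.

(* From t_{2n} = t_n and t_{2n+1} = 1 + t_n. *)
Lemma Ftrunc_decomp N :
  Ftrunc N = (1 + 'X) * Ftrunc N ^+ 2 + 'X * even_series N.+1 %[modX N.+1].
Proof.
apply/eqX_coef => k lt_kN; rewrite coef_Ftrunc lt_kN mulrDl mul1r !coefD.
rewrite !coefXM coef_Ftrunc_sqr // coef_poly.
case: k lt_kN => [|k] lt_kN; first by rewrite /= tm0 !addr0.
rewrite /= coef_Ftrunc_sqr ?(ltn_trans _ lt_kN) // tm_rec modn2 divn2 /=.
case odd_k: (odd k) => /=; first by rewrite add0r !addr0.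
by rewrite add0r addrC uphalf_half odd_k.
Qed.

Definition tm_quad (u v : {poly 'F_2}) := (1 + u) ^+ 2 * v + (1 + u) ^+ 3 * v ^+ 2.

Lemma eqX_tm_quad n u v v' : v = v' %[modX n] -> tm_quad u v = tm_quad u v' %[modX n].
Proof. by move=> Evv'; apply: eqX_add; apply: eqX_mul; rewrite ?eqX_refl ?eqX_exp. Qed.

Lemma Ftrunc_quadratic N : tm_quad 'X (Ftrunc N) = 'X %[modX N.+1].
Proof.
rewrite /tm_quad.
set F := Ftrunc N; set u : {poly 'F_2} := 1 + 'X.
have Fu2 : u ^+ 2 * F = u ^+ 3 * F ^+ 2 + 'X * (u ^+ 2 * even_series N.+1) %[modX N.+1].
  have -> : u ^+ 3 * F ^+ 2 + 'X * (u ^+ 2 * even_series N.+1)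
          = u ^+ 2 * ((1 + 'X) * F ^+ 2 + 'X * even_series N.+1) by rewrite /u; ring.
  exact: eqX_mul (eqX_refl _ _) (Ftrunc_decomp N).
have Fu2X := eqX_trans Fu2 (eqX_add (eqX_refl _ _) (eqX_mul (eqX_refl _ 'X) (X1sqr_even_series _))).
have := eqX_add Fu2X (eqX_refl _ (u ^+ 3 * F ^+ 2)).
by rewrite mulr1 addrAC addrr_F2poly add0r.
Qed.

Definition solves_cubic (N : nat) (G : {poly 'F_2}) := tm_quad G 'X = G %[modX N.+1].

Lemma coef_Gtrunc c N k : (Gtrunc c N)`_k = if (k < N.+1)%N then c k else 0.
Proof. exact: coef_poly. Qed.

Lemma dvdX_Ftrunc N : 'X %| Ftrunc N.
Proof. by rewrite dvdXp horner_coef0 coef_Ftrunc /= tm0. Qed.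

Lemma dvdX_Gtrunc c N : c 0%N = 0 -> 'X %| Gtrunc c N.
Proof. by move=> c0; rewrite dvdXp horner_coef0 coef_Gtrunc /= c0. Qed.

Lemma comp_Ftrunc_quadratic N G : 'X %| G ->
  tm_quad G (Ftrunc N \Po G) = G %[modX N.+1].
Proof.
move=> XG; have := eqX_comp XG (Ftrunc_quadratic N).
by rewrite /tm_quad !(comp_polyD, comp_polyM, rmorphXn) comp_polyX -polyC1 comp_polyC.
Qed.

Lemma solves_cubic_unique N G1 G2 :
  solves_cubic N G1 -> solves_cubic N G2 -> G1 = G2 %[modX N.+1].
Proof.
move=> cubic1 cubic2; apply/eqX_sub0.
pose K := 'X * (2%:R + G1 + G2)
  + 'X ^+ 2 * ((1 + G1) ^+ 2 + (1 + G1) * (1 + G2) + (1 + G2) ^+ 2) - 1.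
apply: (@eqX_cancel _ _ _ K).
  by rewrite -horner_coef0 !hornerE expr2 !mul0r !add0r oppr_eq0 oner_eq0.
have /eqX_sub0 := eqX_add cubic1 (eqX_opp cubic2).
by congr eqX; rewrite /tm_quad /K; ring.
Qed.

Lemma comp_Ftrunc_of_cubic N G : 'X %| G -> solves_cubic N G ->
  Ftrunc N \Po G = 'X %[modX N.+1].
Proof.
move=> XG cubicG; apply/eqX_sub0.
set Phi := Ftrunc N \Po G.
apply: (@eqX_cancel _ _ _ ((1 + G) ^+ 2 + (1 + G) ^+ 3 * (Phi + 'X))).
  move: XG (dvdX_Ftrunc N); rewrite !dvdXp => /eqP G0 /eqP F0.
  by rewrite -horner_coef0 !hornerE horner_comp G0 F0 !addr0 mulr0 addr0 expr1n oner_eq0.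
have /eqX_sub0 := eqX_add (comp_Ftrunc_quadratic N XG) (eqX_opp cubicG).
by congr eqX; rewrite /tm_quad /Phi; ring.
Qed.

(* Z := G o F solves the same equation tm_quad Z F = Z as X does. *)
Lemma comp_Ftrunc_left N G : 'X %| G -> Ftrunc N \Po G = 'X %[modX N.+1] ->
  G \Po Ftrunc N = 'X %[modX N.+1].
Proof.
move=> XG FG; set F := Ftrunc N; set Z := G \Po F.
have XZ : 'X %| Z.
  by move: XG (dvdX_Ftrunc N); rewrite /Z !dvdXp horner_comp => ? /eqP ->.
have FZ : F \Po Z = F %[modX N.+1].
  by rewrite /Z comp_polyA; have := eqX_comp (dvdX_Ftrunc N) FG; rewrite comp_polyX.
have quadZ : tm_quad Z F = Z %[modX N.+1].
  exact/(eqX_trans _ (comp_Ftrunc_quadratic N XZ))/eqX_tm_quad/eqX_sym.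
apply/eqX_sub0.
apply: (@eqX_cancel _ _ _ ((2%:R + Z + 'X) * F
  + ((1 + Z) ^+ 2 + (1 + Z) * (1 + 'X) + (1 + 'X) ^+ 2) * F ^+ 2 - 1)).
  have F0 : F.[0] = 0 by apply/eqP; rewrite -dvdXp dvdX_Ftrunc.
  by rewrite -horner_coef0 !hornerE F0 /= !mulr0 !add0r oppr_eq0 oner_eq0.
have /eqX_sub0 := eqX_add quadZ (eqX_opp (Ftrunc_quadratic N)).
by congr eqX; rewrite /tm_quad /F; ring.
Qed.

Lemma cubic_of_comp_Ftrunc N G : 'X %| G -> Ftrunc N \Po G = 'X %[modX N.+1] ->
  solves_cubic N G.
Proof.
move=> XG FG; apply: eqX_trans (comp_Ftrunc_quadratic N XG).
exact/eqX_tm_quad/eqX_sym.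
Qed.

Lemma comp_inverseP c :
  is_comp_inverse c <-> c 0%N = 0 /\ forall N, solves_cubic N (Gtrunc c N).
Proof.
split=> [[c0 inv_c] | [c0 cubic_c]]; split=> // N.
  apply: cubic_of_comp_Ftrunc (dvdX_Gtrunc N c0) _.
  by apply/eqX_coef => i lt_iN; rewrite coefX; case: (inv_c N i lt_iN).
move=> i le_iN; have FG := comp_Ftrunc_of_cubic (dvdX_Gtrunc N c0) (cubic_c N).
have /eqX_coef GF := comp_Ftrunc_left (dvdX_Gtrunc N c0) FG.
by move/eqX_coef: FG => FG; rewrite FG ?GF ?coefX.
Qed.

Lemma comp_inverse_unique c c' : is_comp_inverse c -> is_comp_inverse c' -> c =1 c'.
Proof.
move=> /comp_inverseP [_ cubic_c] /comp_inverseP [_ cubic_c'] N.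
have /eqX_coef := solves_cubic_unique (cubic_c N) (cubic_c' N).
by move/(_ N (ltnSn N)); rewrite !coef_Gtrunc ltnSn.
Qed.

Section CoefCompXn.
Variable R : nzSemiRingType.
Implicit Types p : {poly R}.

Lemma coef_XnM_comp_Xn p d i k : (i < d)%N ->
  ('X^i * (p \Po 'X^d))`_k = if (k %% d == i)%N then p`_(k %/ d) else 0.
Proof.
move=> lt_id; have d_gt0 : (0 < d)%N by apply: leq_ltn_trans lt_id.
rewrite coefXnM; case: ltnP => [lt_ki | le_ik].
  by rewrite modn_small ?(ltn_trans lt_ki) // (ltn_eqF lt_ki).
rewrite coef_comp_poly_Xn // -eqn_mod_dvd // (modn_small lt_id).
case: eqP => // <-.
have -> : (k - k %% d = k %/ d * d)%N by rewrite {1}(divn_eq k d) addnK.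
by rewrite mulnK.
Qed.

Lemma coef_sumXn_comp_Xn p d m k : (m <= d)%N ->
  ((\sum_(i < m) 'X^i) * (p \Po 'X^d))`_k = if (k %% d < m)%N then p`_(k %/ d) else 0.
Proof.
elim: m => [|m IH] le_md; first by rewrite big_ord0 mul0r coef0.
rewrite big_ord_recr /= mulrDl coefD (IH (ltnW le_md)) coef_XnM_comp_Xn //.
rewrite [in RHS]ltnS [in RHS]leq_eqVlt; case: eqP => [->|_] /=.
  by rewrite ltnn add0r.
by case: ifP; rewrite addr0.
Qed.

End CoefCompXn.

Lemma X1_sumXn_F2 : (1 + 'X : {poly 'F_2}) = \sum_(i < 2) 'X^i.
Proof. by rewrite big_ord_recl big_ord1. Qed.

Lemma X1_cube_sumXn_F2 : (1 + 'X : {poly 'F_2}) ^+ 3 = \sum_(i < 4) 'X^i.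
Proof. by rewrite exprS sqrrD_F2 expr1n !big_ord_recl big_ord0 addr0 /=; ring. Qed.

Definition spread (q : nat) : nat := weighted_bits (expn 4) q.

Lemma spread_rec q : spread q = (4 * spread (q %/ 2) + q %% 2)%N.
Proof.
rewrite /spread weighted_bits_rec expn0 muln1 addnC; congr addn.
by rewrite /weighted_bits big_distrr; apply: eq_bigr => i _; rewrite expnS mulnCA.
Qed.

Lemma spread0 : spread 0 = 0%N.
Proof. by rewrite /spread /weighted_bits big_ord1. Qed.

Lemma spread_double m b : (b <= 1)%N -> spread (2 * m + b) = (4 * spread m + b)%N.
Proof. by move=> le_b1; rewrite spread_rec; congr (4 * spread _ + _)%N; lia. Qed.

Lemma spread_ind (P : nat -> Prop) : P 0%N ->
  (forall m b, (b <= 1)%N -> (0 < 2 * m + b)%N -> P m -> P (2 * m + b)%N) ->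
  forall q, P q.
Proof.
move=> P0 P2 q; elim/ltn_ind: q => -[//|q] IH.
rewrite (divn_eq q.+1 2) mulnC; apply: P2; rewrite -?divn_eq //; last apply: IH.
all: lia.
Qed.

Lemma leq_spread q : (q <= spread q)%N.
Proof. by elim/spread_ind: q => // m b le_b1 _ IH; rewrite spread_double //; lia. Qed.

Lemma spread_gt0 q : (0 < q)%N -> (0 < spread q)%N.
Proof. by move=> q_gt0; apply: leq_trans q_gt0 (leq_spread q). Qed.

Lemma spread_incr q : (spread q < spread q.+1)%N.
Proof.
elim/spread_ind: q => [|m [|[|//]] _ _ IH].
- by rewrite (spread_double 0 (leqnn 1)) spread0.
- have := spread_double m (leq0n 1); have := spread_double m (leqnn 1).
  by rewrite addn0 addn1 => -> ->; lia.
- have := spread_double m (leqnn 1); have := spread_double m.+1 (leq0n 1).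
  by rewrite addn0 mulnS addnC addn2 addn1 => -> ->; lia.
Qed.

Definition is_spread (e : nat) : bool := [exists q : 'I_e.+1, spread q == e].

Lemma is_spreadP e : reflect (exists q, spread q = e) (is_spread e).
Proof.
apply: (iffP existsP) => [[q /eqP <-]|[q sq_e]]; first by exists q.
have lt_qe : (q < e.+1)%N by rewrite ltnS -sq_e leq_spread.
by exists (Ordinal lt_qe); rewrite /= sq_e.
Qed.

Lemma is_spread0 : is_spread 0.
Proof. by apply/is_spreadP; exists 0%N; rewrite spread0. Qed.

Lemma is_spread_rec e : is_spread e = (e %% 4 <= 1)%N && is_spread (e %/ 4).
Proof.
apply/is_spreadP/andP => [[q <-] | [le_e1 /is_spreadP [q sq_e]]].
  by rewrite spread_rec; split; [lia | apply/is_spreadP; exists (q %/ 2)%N; lia].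
by exists (2 * q + e %% 4)%N; rewrite spread_double // sq_e; lia.
Qed.

Definition spread_series (M : nat) : {poly 'F_2} := \poly_(e < M) (is_spread e)%:R.

Lemma spread_series_fix M : spread_series M = (1 + 'X) * spread_series M ^+ 4 %[modX M].
Proof.
apply/eqX_coef => k lt_kM.
rewrite (exp2n_poly_F2 _ 2) X1_sumXn_F2 coef_sumXn_comp_Xn // !coef_poly lt_kM.
rewrite is_spread_rec (leq_ltn_trans (leq_div k 4) lt_kM).
by rewrite (_ : 2 ^ 2 = 4)%N // ltnS; case: leqP.
Qed.

Definition spread_series8 (M : nat) : {poly 'F_2} := spread_series M \Po 'X^8.

Lemma spread_series8_cube M n : (0 < M)%N -> (n <= M * 8)%N ->
  (1 + 'X) ^+ 8 * spread_series8 M ^+ 3 = 1 %[modX n].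
Proof.
move=> M_gt0 le_n; apply: (eqX_leq le_n).
have := eqX_compXn 8 (spread_series_fix M).
rewrite comp_polyM rmorphXn comp_polyD comp_polyX -polyC1 comp_polyC polyC1 -X1_exp8_F2.
rewrite -/(spread_series8 M) => /eqX_sub0 fixP; apply/eqX_sub0.
apply: (@eqX_cancel _ _ _ (spread_series8 M)).
  by rewrite coef_comp_poly_Xn // dvdn0 div0n coef_poly M_gt0 is_spread0 oner_eq0.
by move: fixP; rewrite oppr_F2 [_ - 1]addrC oppr_F2; congr eqX; ring.
Qed.

Definition cTM (m : nat) : 'F_2 :=
  [&& (0 < m)%N, (m.+1 %% 8 < 4)%N & is_spread (m.+1 %/ 8)]%:R.

Lemma cTM_series N :
  1 + 'X * (1 + Gtrunc cTM N) = (1 + 'X) ^+ 3 * spread_series8 N.+2 %[modX N.+2].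
Proof.
apply/eqX_coef => k lt_kN.
rewrite X1_cube_sumXn_F2 coef_sumXn_comp_Xn // coef_poly (leq_ltn_trans (leq_div k 8)) //.
rewrite mulrDr mulr1 !coefD coefX coef1 coefXM coef_Gtrunc.
case: k lt_kN => [|j] lt_jN /=; first by rewrite div0n is_spread0 !addr0.
rewrite (_ : (j < N.+1)%N) // add0r /cTM; case: j lt_jN => [|j] _ /=.
  by rewrite is_spread0 addr0.
by rewrite add0r; case: ifP.
Qed.

Lemma cube_tm_quad_F2 G : (1 + 'X * (1 + G)) ^+ 3 = 1 + 'X + 'X * (tm_quad G 'X - G).
Proof.
apply/eqP; rewrite -subr_eq0.
have -> : (1 + 'X * (1 + G)) ^+ 3 - (1 + 'X + 'X * (tm_quad G 'X - G))
        = ('X + 'X * G *+ 2 + ('X * (1 + G)) ^+ 2) *+ 2 by rewrite /tm_quad; ring.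
by rewrite mulr2n addrr_F2poly.
Qed.

Lemma cTM_solves_cubic N : solves_cubic N (Gtrunc cTM N).
Proof.
set G := Gtrunc cTM N; set P := spread_series8 N.+2.
have cube : (1 + 'X * (1 + G)) ^+ 3 = 1 + 'X %[modX N.+2].
  apply: eqX_trans (eqX_exp 3 (cTM_series N)) _.
  have -> : ((1 + 'X) ^+ 3 * P) ^+ 3 = (1 + 'X) * ((1 + 'X) ^+ 8 * P ^+ 3) by ring.
  rewrite -[X in _ = X %[modX _]]mulr1.
  by apply: eqX_mul (eqX_refl _ _) (spread_series8_cube _ _); rewrite // mulnC; lia.
apply/eqX_sub0/eqX_cancelX; rewrite mulr0.
by move: cube; rewrite /eqX cube_tm_quad_F2 addrAC subrr add0r !subr0.
Qed.

Lemma cTM_comp_inverse : is_comp_inverse cTM.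
Proof. by apply/comp_inverseP; split=> //; exact: cTM_solves_cubic. Qed.

Definition aTM (n : nat) : nat := (8 * spread (n.+1 %/ 4) + n.+1 %% 4 - 1)%N.

Lemma aTM_succ n : (aTM n).+1 = (8 * spread (n.+1 %/ 4) + n.+1 %% 4)%N.
Proof.
have [r0 | r_gt0] := posnP (n.+1 %% 4); last by rewrite /aTM; lia.
have : (0 < spread (n.+1 %/ 4))%N by apply: spread_gt0; lia.
by rewrite /aTM; lia.
Qed.

Lemma aTM_incr n : (aTM n < aTM n.+1)%N.
Proof.
rewrite -ltnS !aTM_succ; have := spread_incr (n.+1 %/ 4).
have [lt_r3 | ge_r3] := ltnP (n.+1 %% 4) 3.
  by rewrite (_ : n.+2 %/ 4 = n.+1 %/ 4)%N; lia.
by rewrite (_ : n.+2 %/ 4 = (n.+1 %/ 4).+1)%N; lia.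
Qed.

Lemma cTM_support m : (0 < m)%N -> cTM m = 1 <-> exists2 n, (0 < n)%N & aTM n = m.
Proof.
move=> m_gt0; rewrite /cTM natr_F2_eq1 m_gt0 /=; split.
  move=> /andP [lt_r4 /is_spreadP [q sq]].
  have q_pos : (q = 0 /\ spread q = 0)%N \/ (0 < q /\ 0 < spread q)%N.
    by case: q sq => [|q] sq; [left; rewrite spread0 | right; rewrite spread_gt0].
  exists (4 * q + m.+1 %% 8 - 1)%N; first by lia.
  apply: succn_inj; rewrite aTM_succ.
  by rewrite (_ : (4 * q + m.+1 %% 8 - 1).+1 %/ 4 = q)%N; lia.
case=> n n_gt0 <-; rewrite aTM_succ; set q := (n.+1 %/ 4)%N.
rewrite (_ : ((8 * spread q + n.+1 %% 4) %/ 8 = spread q)%N); last by lia.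
by apply/andP; split; [lia | apply/is_spreadP; exists q].
Qed.

Lemma is_enum_aTM c : is_comp_inverse c -> is_enum c aTM.
Proof.
move=> c_inv; split; first by rewrite /aTM spread0.
split; first exact: aTM_incr.
move=> m m_gt0; rewrite (comp_inverse_unique c_inv cTM_comp_inverse) cTM_support //.
by split=> [[n] | [n []]]; [exists n | exists n].
Qed.

Lemma is_enum_unique c a b : is_enum c a -> is_enum c b -> a =1 b.
Proof.
move=> [a0 [a_incr a_range]] [b0 [b_incr b_range]].
have a_mono := leq_mono (homo_ltn ltn_trans a_incr).
have b_mono := leq_mono (homo_ltn ltn_trans b_incr).
have a_pos n : (0 < a n.+1)%N by rewrite -a0 ltnNge a_mono.
have b_pos n : (0 < b n.+1)%N by rewrite -b0 ltnNge b_mono.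
elim/ltn_ind => -[|n] IH; first by rewrite a0 b0.
have [p [p_gt0 bp]] : exists p, (0 < p)%N /\ b p = a n.+1.
  by apply/(b_range _ (a_pos n))/(a_range _ (a_pos n)); exists n.+1.
have [q [q_gt0 aq]] : exists q, (0 < q)%N /\ a q = b n.+1.
  by apply/(a_range _ (b_pos n))/(b_range _ (b_pos n)); exists n.+1.
case: (ltngtP p n.+1) => [lt_pn | lt_np | eq_pn]; last by rewrite -bp eq_pn.
  by move/eqP: bp; rewrite -IH // (inj_eq (incn_inj a_mono)) ltn_eqF.
have : (a q < a n.+1)%N by rewrite aq -bp ltnNge b_mono -ltnNge.
rewrite ltnNge a_mono -ltnNge => lt_qn.
by move/eqP: aq; rewrite IH // (inj_eq (incn_inj b_mono)) ltn_eqF.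
Qed.

Lemma spread_bounds q : (q * q + 2 * q <= 3 * spread q)%N /\ (spread q <= q * q)%N.
Proof.
elim/spread_ind: q => [|m b le_b1 _ [lb ub]]; first by rewrite spread0.
by rewrite spread_double //; split; nia.
Qed.

Lemma spread_exp2 k : spread (2 ^ k) = (2 ^ k * 2 ^ k)%N.
Proof.
elim: k => [|k IH]; first by rewrite (spread_double 0 (leqnn 1)) spread0.
by rewrite expnS -[(2 * _)%N]addn0 spread_double // IH; lia.
Qed.

Lemma spread_exp2_pred k : (3 * spread (2 ^ k - 1) + 1 = 2 ^ k * 2 ^ k)%N.
Proof.
elim: k => [|k IH]; first by rewrite spread0.
have exp_gt0 := expn_gt0 2 k.
rewrite expnS (_ : 2 * 2 ^ k - 1 = 2 * (2 ^ k - 1) + 1)%N ?spread_double //; lia.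
Qed.

Lemma aTM_decomp n : exists q r, [/\ (r < 4)%N, n.+1 = (4 * q + r)%N &
  (aTM n).+1 = (8 * spread q + r)%N].
Proof. by exists (n.+1 %/ 4)%N, (n.+1 %% 4)%N; rewrite aTM_succ; split; lia. Qed.

Lemma aTM_lb n : (0 < n)%N -> (n * n <= 6 * aTM n)%N.
Proof.
move=> n_gt0; have [q [r [lt_r4 nE aE]]] := aTM_decomp n.
have [lb _] := spread_bounds q; nia.
Qed.

Lemma aTM_ub n : (2 * aTM n <= n * n + 2 * n)%N.
Proof.
have [q [r [lt_r4 nE aE]]] := aTM_decomp n.
have [_ ub] := spread_bounds q; nia.
Qed.

Lemma aTM_le_sqr n : (aTM n <= n * n)%N.
Proof. by have := aTM_ub n; nia. Qed.

Lemma aTM_at_exp2 k :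
  ((4 * 2 ^ k - 1) * (4 * 2 ^ k - 1) <= 2 * aTM (4 * 2 ^ k - 1))%N.
Proof.
have exp_gt0 := expn_gt0 2 k.
have : (aTM (4 * 2 ^ k - 1)).+1 = (8 * spread (2 ^ k) + 0)%N.
  rewrite aTM_succ (_ : (4 * 2 ^ k - 1).+1 = 4 * 2 ^ k + 0)%N; last by lia.
  by congr (8 * spread _ + _)%N; lia.
rewrite spread_exp2; nia.
Qed.

Lemma aTM_near_exp2 k : (2 <= k)%N ->
  (6 * aTM (4 * 2 ^ k - 5) <= (4 * 2 ^ k - 5) * (4 * 2 ^ k - 5) + 11 * (4 * 2 ^ k - 5))%N.
Proof.
move=> le2k; have ge4 : (4 <= 2 ^ k)%N by rewrite (_ : 4 = 2 ^ 2)%N // leq_exp2l.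
have : (aTM (4 * 2 ^ k - 5)).+1 = (8 * spread (2 ^ k - 1) + 0)%N.
  rewrite aTM_succ (_ : (4 * 2 ^ k - 5).+1 = 4 * (2 ^ k - 1) + 0)%N; last by lia.
  by congr (8 * spread _ + _)%N; lia.
have := spread_exp2_pred k; nia.
Qed.

Lemma nat_crossing (P : pred nat) m1 m2 : (m1 <= m2)%N -> P m1 -> ~~ P m2 ->
  exists k, [/\ (m1 <= k < m2)%N, P k & ~~ P k.+1].
Proof.
elim: m2 => [|m IH] le_m12 Pm1 NPm2.
  by case: m1 le_m12 Pm1 => // _ P0; rewrite P0 in NPm2.
case: (leqP m1 m) => [le_m1m | lt_mm1]; last first.
  have m1E : m1 = m.+1 by apply/eqP; rewrite eqn_leq le_m12.
  by rewrite -m1E Pm1 in NPm2.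
case Pm: (P m); first by exists m; split; rewrite ?le_m1m ?ltnSn.
have [k [/andP [le_m1k lt_km] Pk NPk1]] := IH le_m1m Pm1 (negbT Pm).
by exists k; split; rewrite // le_m1k ltnS (ltnW lt_km).
Qed.

Section RealSequences.
Variable R : realType.
Implicit Types (u : nat -> R) (l : R).

Lemma ler_ratio_nat (a b c d : nat) : (0 < b)%N -> (0 < d)%N -> (a * d <= c * b)%N ->
  (a%:R / b%:R : R) <= c%:R / d%:R.
Proof.
move=> b_gt0 d_gt0 le_ad_cb.
by rewrite ler_pdivrMr ?ltr0n // mulrAC ler_pdivlMr ?ltr0n // -!natrM ler_nat.
Qed.

Lemma harmonic_nonincr m n : (n <= m)%N -> harmonic m <= harmonic n :> R.
Proof. by move=> le_nm; rewrite /= lef_pV2 ?posrE ?ltr0n // ler_nat ltnS. Qed.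

Lemma cvg_harmonic_slack l : (fun n => (l + 2 * harmonic n)%:E) @ \oo --> l%:E.
Proof.
apply: cvg_EFin; first exact: nearW.
rewrite -[X in _ --> X]addr0 -[X in _ + X](mulr0 2).
by apply: cvgD; [exact: cvg_cst | apply: cvgMl_tmp; exact: cvg_harmonic].
Qed.

Lemma limn_esup_slack u l :
  (forall m, (0 < m)%N -> u m <= l + 2 * harmonic m) ->
  (forall N, exists2 m, (N <= m)%N & l <= u m) ->
  limn_esup (fun n => (u n)%:E) = l%:E.
Proof.
move=> ub often_ge; rewrite limn_esup_lim; apply: cvg_lim => //.
apply: (@squeeze_cvge _ _ _ _ (cst l%:E) _ (fun n => (l + 2 * harmonic n)%:E)).
- exists 1%N => // n /= n_gt0; apply/andP; split.
    have [m le_nm ge_l] := often_ge n.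
    by apply: le_ereal_sup_tmp; exists (u m)%:E => //; exists m.
  apply: ge_ereal_sup => _ [m /= le_nm <-]; rewrite lee_fin.
  apply: le_trans (ub m (leq_trans n_gt0 le_nm)) _.
  by rewrite lerD2l ler_pM2l // harmonic_nonincr.
- exact: cvg_cst.
- exact: cvg_harmonic_slack.
Qed.

Lemma limn_einf_slack u l :
  (forall m, (0 < m)%N -> l <= u m) ->
  (forall N, exists2 m, (N <= m)%N & u m <= l + 2 * harmonic m) ->
  limn_einf (fun n => (u n)%:E) = l%:E.
Proof.
move=> lb often_le; rewrite limn_einf_lim; apply: cvg_lim => //.
apply: (@squeeze_cvge _ _ _ _ (cst l%:E) _ (fun n => (l + 2 * harmonic n)%:E)).
- exists 1%N => // n /= n_gt0; apply/andP; split.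
    apply: le_ereal_inf_tmp => _ [m /= le_nm <-]; rewrite lee_fin.
    exact: lb (leq_trans n_gt0 le_nm).
  have [m le_nm le_l] := often_le n.
  apply: ge_ereal_inf; exists (u m)%:E; first by exists m.
  rewrite lee_fin; apply: le_trans le_l _.
  by rewrite lerD2l ler_pM2l // harmonic_nonincr.
- exact: cvg_cst.
- exact: cvg_harmonic_slack.
Qed.

Lemma approx_slow_descent u lo hi :
  (forall n, (0 < n)%N -> u n - 2 * harmonic n <= u n.+1) ->
  (forall N, exists2 m, (N <= m)%N & hi <= u m) ->
  (forall N, exists2 m, (N <= m)%N & u m <= lo + 2 * harmonic m) ->
  forall x, lo <= x <= hi -> forall e : R, 0 < e -> exists2 n, (0 < n)%N & `|x - u n| < e.
Proof.
move=> step often_hi often_lo x /andP [lo_x x_hi] e e_gt0.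
have [N _ HN] := near_infty_natSinv_lt (PosNum (divr_gt0 e_gt0 (ltr0n _ 2))).
have slack_lt k : (N <= k)%N -> 2 * harmonic k < e.
  move=> le_Nk; rewrite -ltr_pdivlMl // mulrC; exact: HN.
have [m1 le_Nm1 hi_m1] := often_hi N.+1.
have [m2 le_m12 lo_m2] := often_lo m1.
have m1_gt0 : (0 < m1)%N by apply: leq_trans le_Nm1.
have [x_le | lt_x] := leP x (u m2).
  exists m2; first exact: leq_trans m1_gt0 le_m12.
  rewrite distrC ger0_norm ?subr_ge0 //.
  have := slack_lt m2 (leq_trans (ltnW le_Nm1) le_m12); lra.
have [k [/andP [le_m1k lt_km2] x_uk lt_uk1]] :=
  @nat_crossing (fun k => x <= u k) m1 m2 le_m12 (le_trans x_hi hi_m1) (negbT (lt_geF lt_x)).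
rewrite -ltNge in lt_uk1; exists k.+1 => //.
have := step k (leq_trans m1_gt0 le_m1k).
have := slack_lt k (leq_trans (ltnW le_Nm1) le_m1k).
rewrite ger0_norm ?subr_ge0; lra.
Qed.

Lemma sub_closure_image u (A : set R) :
  (forall x, A x -> forall e : R, 0 < e -> exists2 n, (0 < n)%N & `|x - u n| < e) ->
  A `<=` closure (u @` [set n : nat | (0 < n)%N]).
Proof.
move=> approx x Ax B /nbhs_ballP [e e_gt0 eB].
have [n n_gt0 x_un] := approx x Ax e e_gt0.
by exists (u n); split; [exists n | apply: eB; rewrite -ball_normE].
Qed.

End RealSequences.

Section aTMRatio.
Variable R : realType.

Lemma a_ratio_aTM n : a_ratio R aTM n = (aTM n)%:R / (n * n)%:R.
Proof. by rewrite /a_ratio expnS expn1. Qed.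

Lemma aTM_ratio_ge m : (0 < m)%N -> 6^-1 <= a_ratio R aTM m.
Proof.
move=> m_gt0; rewrite a_ratio_aTM -[6^-1]div1r -[X in X / _ <= _](mulr1n 1).
by apply: ler_ratio_nat; rewrite ?muln_gt0 ?m_gt0 // mul1n mulnC aTM_lb.
Qed.

Lemma aTM_ratio_le m : (0 < m)%N -> a_ratio R aTM m <= 2^-1 + 2 * harmonic m.
Proof.
move=> m_gt0.
have -> : 2^-1 + 2 * harmonic m = (m + 5)%N%:R / (2 * m + 2)%N%:R :> R.
  by rewrite /= -[m.+1]addn1 !natrD; field; rewrite natr1 -!natrD !pnatr_eq0 addnS.
by have ub := aTM_ub m; rewrite a_ratio_aTM; apply: ler_ratio_nat; nia.
Qed.

Lemma aTM_ratio_often_ge N : exists2 m, (N <= m)%N & 2^-1 <= a_ratio R aTM m.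
Proof.
have lt_N := ltn_expl N (isT : (1 < 2)%N).
exists (4 * 2 ^ N - 1)%N; first by lia.
have at_exp2 := aTM_at_exp2 N.
by rewrite a_ratio_aTM -[2^-1]div1r -[X in X / _ <= _](mulr1n 1); apply: ler_ratio_nat; nia.
Qed.

Lemma aTM_ratio_often_le N :
  exists2 m, (N <= m)%N & a_ratio R aTM m <= 6^-1 + 2 * harmonic m.
Proof.
have lt_N := ltn_expl N.+2 (isT : (1 < 2)%N).
have ge4 : (4 <= 2 ^ N.+2)%N by rewrite (_ : 4 = 2 ^ 2)%N // leq_exp2l.
set m := (4 * 2 ^ N.+2 - 5)%N; have ge11 : (11 <= m)%N by rewrite /m; lia.
exists m; first by rewrite /m; lia.
have -> : 6^-1 + 2 * harmonic m = (m + 13)%N%:R / (6 * m + 6)%N%:R :> R.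
  by rewrite /= -[m.+1]addn1 !natrD; field; rewrite natr1 -!natrD !pnatr_eq0 addnS.
have near_exp2 := aTM_near_exp2 (isT : (2 <= N.+2)%N); rewrite -/m in near_exp2.
by rewrite a_ratio_aTM; apply: ler_ratio_nat; nia.
Qed.

Lemma aTM_ratio_step n : (0 < n)%N ->
  a_ratio R aTM n - 2 * harmonic n <= a_ratio R aTM n.+1.
Proof.
move=> n_gt0; rewrite lerBlDr.
have -> : a_ratio R aTM n.+1 + 2 * harmonic n
          = (aTM n.+1 + 2 * n.+1)%N%:R / (n.+1 * n.+1)%N%:R :> R.
  by rewrite a_ratio_aTM /= !natrD !natrM; field; rewrite nat1r pnatr_eq0.
have le_sqr := aTM_le_sqr n; have incr := aTM_incr n.
by rewrite a_ratio_aTM; apply: ler_ratio_nat; nia.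
Qed.

End aTMRatio.

Theorem mainTheorem10 (R : realType) :
  (exists c, is_comp_inverse c) /\
  forall c : nat -> 'F_2, is_comp_inverse c ->
    (exists a, is_enum c a) /\
    forall a : nat -> nat, is_enum c a ->
      limn_einf (fun n => (a_ratio R a n)%:E) = (6^-1 : R)%:E /\
      limn_esup (fun n => (a_ratio R a n)%:E) = (2^-1 : R)%:E /\
      [set x : R | 6^-1 <= x <= 2^-1] `<=`
        closure (a_ratio R a @` [set n : nat | (0 < n)%N]).
Proof.
split=> [|c c_inv]; first by exists cTM; exact: cTM_comp_inverse.
split=> [|a a_enum]; first by exists aTM; exact: is_enum_aTM.
have -> : a = aTM := funext (is_enum_unique a_enum (is_enum_aTM c_inv)).
split; first exact: limn_einf_slack (@aTM_ratio_ge R) (@aTM_ratio_often_le R).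
split; first exact: limn_esup_slack (@aTM_ratio_le R) (@aTM_ratio_often_ge R).
apply: sub_closure_image => x.
exact: approx_slow_descent (@aTM_ratio_step R) (@aTM_ratio_often_ge R) (@aTM_ratio_often_le R) x.
Qed.
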